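(* Let $\mathcal{M}$ be a matroid of rank $c$ on $[n]$ and order $G(J(\mathcal{M}))$ by the iterated-contraction order $\preceq$ along an ordered basis $(v_1,\ldots,v_c)$ (see context). Let $N\in G(J(\mathcal{M}))$, $N\neq\min G(J(\mathcal{M}))$. Then $$C_N=\begin{cases}J(\mathcal{M}(\gamma_N)^0), & \text{if } i_N=0,\\ J(\mathcal{M}'(\gamma_N)^0), & \text{if } i_N>0,\ \text{where }\mathcal{M}'=\mathcal{M}/\{v_1,\ldots,v_{i_N}\}.\end{cases}$$ Moreover, for any given $N$ one can choose such an ordering with $i_N=0$.
   Context: $R=\mathbb{K}[x_1,\ldots,x_n]$, $\mathbb{K}$ a field. For a matroid $\mathcal{N}$ on $E\subseteq[n]$, $J(\mathcal{N})=\bigcap_{F\in\mathcal{B}(\mathcal{N})}(x_i:i\in F)$, formed in $\mathbb{K}[x_i:i\in E]$ and extended to $R$. $\mathcal{M}/A$ is contraction by an independent set $A$. $G(\cdot)$ is the set of minimal monomial generators. For a monomial $N=\prod x_i^{a_i}$, $\gamma_N(i)=a_i$ and $\operatorname{supp}\gamma_N=\{i:a_i>0\}$. For a matroid $\mathcal{N}$ and $N\in G(J(\mathcal{N}))$ ($\gamma_N$ is then a basic $1$-cover of $\mathcal{N}$), $\mathcal{N}(\gamma_N)$ is the matroid whose bases are the bases $F$ of $\mathcal{N}$ with $\sum_{i\in F}\gamma_N(i)=1$, and $\mathcal{N}(\gamma_N)^0$ is its restriction to the complement of $\operatorname{supp}\gamma_N$. Order: $J_i=J(\mathcal{M}/\{v_1,\ldots,v_i\})$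 for $0\le i\le c$; one has $G(J_c)\subseteq\cdots\subseteq G(J_0)$. Choose any total order on each $G(J_i)-G(J_{i+1})$; for $N\in G(J)$ let $i_N$ be the index with $N\in G(J_i)-G(J_{i+1})$; set $N\prec N'$ iff $i_N>i_{N'}$, or $i_N=i_{N'}$ and $N$ precedes $N'$ in the chosen order. $C_N=(N'\in G(J):N'\prec N):N$. *)

From HB Require Import structures.
From mathcomp Require Import all_boot all_order all_algebra.
From mathcomp Require Import mpoly.
Set Implicit Arguments. Unset Strict Implicit. Unset Printing Implicit Defensive.
Import GRing.Theory.
Local Open Scope ring_scope.

Record matroid (n : nat) := Matroid {
  mground : {set 'I_n};
  mbases : {set {set 'I_n}};
  mbases_sub : forall F, F \in mbases -> F \subset mground;
  mbases_nonempty : mbases != set0;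
  mbases_exch : forall B1 B2, B1 \in mbases -> B2 \in mbases ->
    forall x, x \in B1 :\: B2 ->
      exists2 y, y \in B2 :\: B1 & (y |: (B1 :\ x)) \in mbases }.

Definition has_rank n (M : matroid n) (c : nat) : Prop :=
  forall F, F \in mbases M -> #|F| = c.

(* ordered basis (v_1,...,v_c), indexed by 'I_c (v_{j+1} = v j) *)
Definition ordered_basis n c (M : matroid n) (v : 'I_c -> 'I_n) : Prop :=
  injective v /\ [set v j | j : 'I_c] \in mbases M.

Definition first_elems n c (v : 'I_c -> 'I_n) (i : nat) : {set 'I_n} :=
  [set v j | j : 'I_c & (j < i)%N].

(* bases of the contraction M/A (A independent) *)
Definition contract_bases n (B : {set {set 'I_n}}) (A : {set 'I_n}) :=
  [set F :\: A | F in B & A \subset F].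

Definition restrict_bases n (B : {set {set 'I_n}}) (S : {set 'I_n}) :=
  let I := [set F :&: S | F in B] in
  [set X in I | [forall Y in I, ~~ (X \proper Y)]].

Section Ideals.
Variables (n : nat) (K : fieldType).
Local Notation P := {mpoly K[n]}.

Definition ideal_gen (S : P -> Prop) (p : P) : Prop :=
  exists rs : seq (P * P),
    (forall q, q \in rs -> S q.2) /\ p = \sum_(q <- rs) q.1 * q.2.

Definition var_ideal (F : {set 'I_n}) : P -> Prop :=
  ideal_gen (fun q => exists2 i, i \in F & q = 'X_i).

Definition Jideal (B : {set {set 'I_n}}) (p : P) : Prop :=
  forall F, F \in B -> var_ideal F p.

Definition colon (I : P -> Prop) (f : P) (p : P) : Prop := I (p * f).

Definition ideal_eq (I1 I2 : P -> Prop) : Prop := forall p, I1 p <-> I2 p.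

Definition min_gen (I : P -> Prop) (N : 'X_{1..n}) : Prop :=
  I 'X_[N] /\
  forall N' : 'X_{1..n}, I 'X_[N'] -> (forall i, (N' i <= N i)%N) -> N' = N.
End Ideals.
Arguments Jideal {n} K B p.

Definition msupp n (N : 'X_{1..n}) : {set 'I_n} := [set i | (0 < N i)%N].

(* bases of N(gamma_N): bases F with sum_{i in F} gamma_N(i) = 1 *)
Definition cover_bases n (B : {set {set 'I_n}}) (N : 'X_{1..n}) :=
  [set F in B | (\sum_(i in F) N i == 1)%N].

Definition cover0_bases n (B : {set {set 'I_n}}) (N : 'X_{1..n}) :=
  restrict_bases (cover_bases B N) (~: msupp N).

Definition Jlevel n (K : fieldType) c (M : matroid n) (v : 'I_c -> 'I_n) (i : nat)
  : {mpoly K[n]} -> Prop :=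
  Jideal K (contract_bases (mbases M) (first_elems v i)).

(* i_N = i  iff  N ∈ G(J_i) − G(J_{i+1})  (0 <= i <= c, with G(J_{c+1}) = ∅) *)
Arguments Jlevel {n} K {c} M v i.
Definition level_of n (K : fieldType) c (M : matroid n) (v : 'I_c -> 'I_n)
  (N : 'X_{1..n}) (i : nat) : Prop :=
  (i <= c)%N /\ min_gen (Jlevel K M v i) N /\
  ((i < c)%N -> ~ min_gen (Jlevel K M v i.+1) N).

(* s lists G(J(M)) in an order ≺ (N ≺ N' iff N occurs before N' in s)
   obtained by ordering blocks by decreasing i_N and each block arbitrarily *)
Arguments level_of {n} K {c} M v N i.
Definition admissible_order n (K : fieldType) c (M : matroid n) (v : 'I_c -> 'I_n)
  (s : seq 'X_{1..n}) : Prop :=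
  uniq s /\
  (forall N, N \in s <-> min_gen (Jideal K (mbases M)) N) /\
  (forall N N' i i', N \in s -> N' \in s ->
     level_of K M v N i -> level_of K M v N' i' -> (i' < i)%N ->
     (index N s < index N' s)%N).

Arguments admissible_order {n} K {c} M v s.
Definition C_ideal n (K : fieldType) (s : seq 'X_{1..n}) (N : 'X_{1..n})
  : {mpoly K[n]} -> Prop :=
  colon (ideal_gen (fun q => exists2 N', (N' \in s) && (index N' s < index N s)%N
                                          & q = 'X_[N'])) 'X_[N].
Arguments C_ideal {n} K s N.

(* The minimal generators of J(B) are the squarefree monomials x^S with S a
   minimal transversal of B (for the bases of a matroid: a cocircuit), and
   those of J(M/A) are the cocircuits disjoint from A.  So i_N = i means that
   S = supp N avoids v_1, ..., v_i and contains v_(i+1), and a monomial m lies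
   in C_N iff some N' preceding N divides N m.
   If N' precedes N, its support D is a cocircuit avoiding v_1, ..., v_i.  Let
   F be a basis of M/{v_1..v_i} meeting S in a single point.  If supp m missed
   F \ S, then D would meet F only in that point, and uniqueness of the
   fundamental cocircuit of a point with respect to a basis gives D = S.
   Conversely, if supp m meets every such F \ S (these all have the same size,
   so they are exactly the bases of the restriction), then
   (supp m u S) \ {v_1..v_(i+1)} meets every basis of M/{v_1..v_(i+1)}; a
   cocircuit inside it has level > i, hence precedes N, and divides N m.
   For the last claim, list first the point of a basis meeting S only once. *)

From Pilot Require Import Defs.
From HB Require Import structures.
From mathcomp Require Import all_boot all_order all_algebra.
From mathcomp Require Import mpoly.
Set Implicit Arguments. Unset Strict Implicit. Unset Printing Implicit Defensive.
Import GRing.Theory.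

(* [msupp] of mpoly (the support of a polynomial) shadows the one of Defs. *)
Local Notation supp := Defs.msupp.

Definition transversal n (B : {set {set 'I_n}}) (X : {set 'I_n}) : bool :=
  [forall F in B, ~~ [disjoint F & X]].

Definition squarefree n (N : 'X_{1..n}) : Prop := forall i, N i <= 1.

Definition mnm_of_set n (X : {set 'I_n}) : 'X_{1..n} :=
  [multinom (i \in X : nat) | i < n].

Lemma supp_mnm_of_set n (X : {set 'I_n}) : supp (mnm_of_set X) = X.
Proof. by apply/setP => i; rewrite inE mnmE; case: (i \in X). Qed.

Lemma squarefree_mnm_of_set n (X : {set 'I_n}) : squarefree (mnm_of_set X).
Proof. by move=> i; rewrite mnmE; case: (i \in X). Qed.

Lemma mnm_of_supp n (N : 'X_{1..n}) : squarefree N -> mnm_of_set (supp N) = N.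
Proof.
by move=> sqN; apply/mnmP => i; rewrite mnmE inE; move: (sqN i); case: (N i) => [|[|]].
Qed.

Lemma supp_le_add n (N' N m : 'X_{1..n}) :
  (N' <= N + m)%MM -> supp N' \subset supp N :|: supp m.
Proof.
move=> /mnm_lepP le_N'; apply/subsetP => x; rewrite !inE -addn_gt0 -mnmDE.
by move=> /leq_trans; apply.
Qed.

Lemma sum_squarefree n (N : 'X_{1..n}) (F : {set 'I_n}) :
  squarefree N -> \sum_(j in F) N j = #|F :&: supp N|.
Proof.
move=> sqN; rewrite -sum1_card big_mkcond [RHS]big_mkcond /=.
apply: eq_bigr => j _; rewrite !inE; case: (j \in F) => //=.
by move: (sqN j); case: (N j) => [|[|]].
Qed.

Section MonomialIdeals.
Variables (n : nat) (K : fieldType).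
Local Notation P := {mpoly K[n]}.
Local Open Scope ring_scope.

Definition monomial_ideal (G : 'X_{1..n} -> Prop) : P -> Prop :=
  ideal_gen (fun q : P => exists2 g, G g & q = 'X_[g]).

Lemma monomial_idealP G (p : P) : monomial_ideal G p <->
  (forall m, m \in msupp p -> exists2 g, G g & (g <= m)%MM).
Proof.
split.
  case=> rs [Grs ->]; elim: rs Grs => [|[q1 q2] rs IHrs] Grs m.
    by rewrite big_nil msupp0.
  rewrite big_cons => /msuppD_le; rewrite mem_cat => /orP [|]; last first.
    by apply: IHrs => q rs_q; apply: Grs; rewrite in_cons rs_q orbT.
  have [g Gg ->] := Grs _ (mem_head _ _).
  rewrite (perm_mem (msuppMX _ _)) => /mapP [m' _ ->].
  by exists g => //; apply: lem_addr.
rewrite {-1}(mpolyE p); elim: (msupp p) => [|m l IHl] divG.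
  by exists [::]; split => //; rewrite !big_nil.
have [rs [Grs sum_rs]] : monomial_ideal G (\sum_(m0 <- l) p@_m0 *: 'X_[m0]).
  by apply: IHl => m' l_m'; apply: divG; rewrite in_cons l_m' orbT.
have [g Gg le_gm] := divG m (mem_head _ _).
exists ((p@_m *: 'X_[m - g], 'X_[g]) :: rs); split.
  by move=> q; rewrite in_cons => /orP [/eqP -> /=|]; [exists g | exact: Grs].
by rewrite !big_cons sum_rs /= -scalerAl -mpolyXD submK.
Qed.

Lemma ideal_genS (S S' : P -> Prop) :
  (forall q, S q -> S' q) -> forall p, ideal_gen S p -> ideal_gen S' p.
Proof. by move=> SS' p [rs [Srs ->]]; exists rs; split => // q /Srs /SS'. Qed.

Lemma var_idealP F (p : P) : var_ideal F p <->
  (forall m, m \in msupp p -> ~~ [disjoint F & supp m]).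
Proof.
have -> : var_ideal F p <->
    monomial_ideal (fun g => exists2 i, i \in F & g = U_(i)%MM) p.
  split; apply: ideal_genS => q.
    by case=> i Fi ->; exists U_(i)%MM => //; exists i.
  by case=> g [i Fi ->] ->; exists i.
rewrite monomial_idealP; split=> divF m /divF.
  case=> g [i Fi ->]; rewrite lep1mP -lt0n => m_i.
  by apply/negP => /disjointFr /(_ Fi); rewrite inE m_i.
rewrite -setI_eq0 => /set0Pn [i /setIP [Fi]]; rewrite inE => m_i.
by exists U_(i)%MM; [exists i | rewrite lep1mP -lt0n].
Qed.

Lemma JidealP B (p : P) : Jideal K B p <->
  (forall m, m \in msupp p -> transversal B (supp m)).
Proof.
split=> [Jp m p_m | transB F BF].
  by apply/forall_inP => F /Jp /var_idealP; apply.
by apply/var_idealP => m /transB /forall_inP; apply.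
Qed.

Lemma Jideal_X B (N : 'X_{1..n}) : Jideal K B 'X_[N] <-> transversal B (supp N).
Proof.
rewrite JidealP msuppX; split; first by apply; rewrite mem_seq1.
by move=> transB m; rewrite mem_seq1 => /eqP ->.
Qed.

Lemma min_gen_Jideal B (N : 'X_{1..n}) :
  min_gen (Jideal K B) N <-> squarefree N /\ minset (transversal B) (supp N).
Proof.
split=> [[/Jideal_X transN minN] | [sqN /minsetP [transN minN]]].
  have sqN : squarefree N.
    move=> i; rewrite leqNgt; apply/negP => N_i.
    have supp_sub : supp (N - U_(i))%MM = supp N.
      apply/setP => j; rewrite !inE mnmBE mnm1E.
      by case: eqP => [<-|_]; [rewrite subn_gt0 N_i (ltn_trans _ N_i) | rewrite subn0].
    have /mnmP/(_ i)/eqP : (N - U_(i))%MM = N.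
      apply: minN => [|j]; first by apply/Jideal_X; rewrite supp_sub.
      by rewrite mnmBE leq_subr.
    have N_i_gt0 : (0 < N i)%N := ltn_trans (ltnSn 0) N_i.
    by rewrite mnmBE mnm1E eqxx -{2}(subn0 (N i)) eqn_sub2lE ?(ltnW N_i).
  split=> //; apply/minsetP; split=> // Y transY sub_YN.
  rewrite -[Y]supp_mnm_of_set -[supp N]supp_mnm_of_set; congr supp.
  rewrite mnm_of_supp //; apply: minN; first by apply/Jideal_X; rewrite supp_mnm_of_set.
  move=> i; rewrite mnmE; case Y_i: (i \in Y) => //.
  by move/subsetP: sub_YN => /(_ i Y_i); rewrite inE.
split; first exact/Jideal_X.
move=> N' /Jideal_X transN' le_N'N.
have supp_N' : supp N' = supp N.
  by apply: minN transN' _; apply/subsetP => i; rewrite !inE => /leq_trans; apply.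
apply/mnmP => i; apply/eqP; rewrite eqn_leq le_N'N /=.
move/setP/(_ i): supp_N'; rewrite !inE; move: (sqN i).
by case: (N i) => [|[|]] //= _ /esym; case: (N' i).
Qed.

End MonomialIdeals.

Section Transversals.
Variables (n : nat) (B : {set {set 'I_n}}).

Lemma transversal_meet_sub1 (S F : {set 'I_n}) c : transversal B S -> F \in B ->
  F :&: S \subset [set c] -> F :&: S = [set c].
Proof.
move=> /forall_inP /(_ F) transS BF; rewrite subset1 => /orP [/eqP // | /eqP FS0].
by move: (transS BF); rewrite -setI_eq0 FS0 eqxx.
Qed.

Lemma min_transversal_meet1 (S : {set 'I_n}) c : minset (transversal B) S -> c \in S ->
  exists2 G, G \in B & G :&: S = [set c].
Proof.
move=> minS Sc.
have /forall_inPn [G BG /negbNE dGS] : ~~ transversal B (S :\ c).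
  apply/negP => /(minsetinf minS) /(_ (subD1set S c)) /setP /(_ c).
  by rewrite !inE eqxx Sc.
exists G => //; apply: (transversal_meet_sub1 (minsetp minS) BG).
apply/subsetP => x /setIP [Gx Sx]; rewrite inE; apply: contraLR Sx => neq_xc.
by move: (disjointFr dGS Gx); rewrite !inE neq_xc /= => ->.
Qed.

Lemma transversal_contractD (A X : {set 'I_n}) : transversal (contract_bases B A) X ->
  transversal (contract_bases B A) (X :\: A).
Proof.
move=> /forall_inP transX; apply/forall_inP => F BAF.
have := transX F BAF; rewrite -!setI_eq0 => /set0Pn [x /setIP [Fx Xx]].
case/imsetP: BAF Fx => F0 _ ->; rewrite inE => /andP [nAx F0x].
by apply/set0Pn; exists x; rewrite !inE nAx F0x Xx.
Qed.

End Transversals.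

Section Matroid.
Variables (n : nat) (M : matroid n).
Local Notation B := (mbases M).

Lemma basis_extend (A V F : {set 'I_n}) : V \in B -> A \subset V -> F \in B ->
  exists2 W, W \in B & (A \subset W) && (W \subset A :|: F).
Proof.
(* Exchange the elements of V outside A :|: F one at a time for elements of F. *)
move=> + + BF; move: {2}#|V :\: (A :|: F)| (leqnn #|V :\: (A :|: F)|) => k.
elim: k V => [|k IHk] W le_k BW sAW.
  by exists W; rewrite // sAW -setD_eq0 -cards_eq0 -leqn0.
have [dWAF | [x]] := set_0Vmem (W :\: (A :|: F)).
  by exists W; rewrite // sAW -setD_eq0 dWAF eqxx.
rewrite !inE negb_or => /andP [/andP [nAx nFx] Wx].
have WFx : x \in W :\: F by rewrite inE nFx Wx.
have [y /setDP [Fy nWy] BW'] := mbases_exch BW BF WFx.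
apply: (IHk (y |: (W :\ x))) => //; last first.
  apply/subsetP => a Aa; rewrite !inE (subsetP sAW _ Aa) andbT.
  by apply/orP; right; apply: contraNneq nAx => <-.
rewrite -ltnS (leq_trans _ le_k) // proper_card //; apply/properP; split.
  apply/subsetP => z; rewrite !inE negb_or => /andP [/andP [nAz nFz]].
  by case/orP => [/eqP zy | /andP [_ ->]]; [move: nFz; rewrite zy Fy | rewrite nAz nFz].
exists x; first by rewrite !inE negb_or nAx nFx Wx.
rewrite !inE negb_or nAx nFx eqxx /= orbF.
by apply: contraNneq nWy => <-.
Qed.

Lemma transversal_contract (A V X : {set 'I_n}) :
  V \in B -> A \subset V -> [disjoint X & A] ->
  transversal (contract_bases B A) X = transversal B X.
Proof.
move=> BV sAV dXA; apply/forall_inP/forall_inP => transX F BF.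
  have [W BW /andP [sAW sWAF]] := basis_extend BV sAV BF.
  have /transX : W :\: A \in contract_bases B A.
    by apply/imsetP; exists W; rewrite ?inE ?BW.
  rewrite -!setI_eq0 => /set0Pn [x /setIP [/setDP [Wx nAx] Xx]].
  apply/set0Pn; exists x; rewrite inE Xx andbT.
  by move: (subsetP sWAF x Wx); rewrite inE (negbTE nAx).
case/imsetP: BF => F0; rewrite inE => /andP [BF0 _] ->.
have := transX F0 BF0; rewrite -!setI_eq0 => /set0Pn [x /setIP [F0x Xx]].
by apply/set0Pn; exists x; rewrite !inE F0x Xx (disjointFr dXA Xx).
Qed.

Lemma minset_transversal_contract (A V X : {set 'I_n}) : V \in B -> A \subset V ->
  minset (transversal (contract_bases B A)) X =
  minset (transversal B) X && [disjoint X & A].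
Proof.
move=> BV sAV; have eq_transversal := transversal_contract BV sAV.
apply/idP/andP => [minX | [/minsetP [transX minX] dXA]].
  have dXA : [disjoint X & A].
    apply/setDidPl; apply: (minsetinf minX) (subsetDl X A).
    exact: transversal_contractD (minsetp minX).
  split=> //; apply/minsetP; split=> [|Y transY sYX].
    by rewrite -eq_transversal // minsetp.
  have dYA := disjointWl sYX dXA.
  by apply: (minsetinf minX _ sYX); rewrite eq_transversal.
apply/minsetP; split=> [|Y transY sYX]; first by rewrite eq_transversal.
have dYA := disjointWl sYX dXA.
by apply: minX sYX; rewrite -eq_transversal.
Qed.

Lemma fundamental_cocircuit_unique (S D F : {set 'I_n}) c :
  minset (transversal B) S -> minset (transversal B) D -> F \in B ->
  F :&: S = [set c] -> F :&: D = [set c] -> S = D.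
Proof.
(* Exchange c out of F against a basis G meeting S only at some c' \notin D:
   the new basis can meet S and D only at the incoming element. *)
move=> minS minD BF FS FD; apply/eqP; apply: contraT => neq_SD.
have [c' Sc' nDc'] : exists2 c', c' \in S & c' \notin D.
  apply/subsetPn; apply: contra neq_SD => sSD.
  by rewrite (minsetinf minD (minsetp minS) sSD).
have [G BG GS] := min_transversal_meet1 minS Sc'.
have /setIP [Fc Sc] : c \in F :&: S by rewrite FS set11.
have /setIP [_ Dc] : c \in F :&: D by rewrite FD set11.
have nGc : c \notin G.
  apply: contra nDc' => Gc; have : c \in G :&: S by rewrite inE Gc Sc.
  by rewrite GS => /set1P <-.
have FGc : c \in F :\: G by rewrite inE nGc Fc.
have [y /setDP [Gy _] BF'] := mbases_exch BF BG FGc.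
have exchanged_meets X : minset (transversal B) X -> F :&: X = [set c] -> y \in X.
  move=> /minsetp /forall_inP /(_ _ BF'); rewrite -setI_eq0 => + FX.
  case/set0Pn => z /setIP [+ Xz]; rewrite !inE => /orP [/eqP <- // | /andP [nzc Fz]].
  have : z \in F :&: X by rewrite inE Fz Xz.
  by rewrite FX => /set1P zc; rewrite zc eqxx in nzc.
have : y \in G :&: S by rewrite inE Gy (exchanged_meets S).
by rewrite GS => /set1P yc'; move: nDc'; rewrite -yc' (exchanged_meets D).
Qed.

End Matroid.

Lemma setDI_disjoint n (F A X : {set 'I_n}) :
  [disjoint X & A] -> (F :\: A) :&: X = F :&: X.
Proof. by move=> dXA; rewrite setIDAC; apply/setDidPl/(disjointWl (subsetIr F X)). Qed.

Lemma contract_bases0 n (B : {set {set 'I_n}}) : contract_bases B set0 = B.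
Proof.
apply/setP => F; apply/imsetP/idP => [[F0 /setIdP [BF0 _] ->] | BF].
  by rewrite setD0.
by exists F; rewrite ?setD0 // inE BF sub0set.
Qed.

Lemma card_contract_bases n (B : {set {set 'I_n}}) (A : {set 'I_n}) c :
  (forall F, F \in B -> #|F| = c) ->
  forall F, F \in contract_bases B A -> #|F| = c - #|A|.
Proof.
move=> cardB _ /imsetP [F /setIdP [BF sAF] ->].
by rewrite cardsD (setIidPr sAF) cardB.
Qed.

Lemma card_cover_bases_supp n (B : {set {set 'I_n}}) (N : 'X_{1..n}) F :
  squarefree N -> F \in cover_bases B N -> #|F :&: supp N| = 1.
Proof. by move=> sqN; rewrite inE -sum_squarefree // => /andP [_ /eqP]. Qed.

Lemma restrict_bases_const_card n (B : {set {set 'I_n}}) (S : {set 'I_n}) k :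
  (forall F, F \in B -> #|F :&: S| = k) ->
  restrict_bases B S = [set F :&: S | F in B].
Proof.
move=> cardB; apply/setP => X; rewrite /restrict_bases inE.
apply/andb_idr => /imsetP [F BF ->]; apply/forall_inP => _ /imsetP [G BG ->].
by apply/negP => /proper_card; rewrite !cardB ?ltnn.
Qed.

Lemma cover0_bases_const_card n (B : {set {set 'I_n}}) (N : 'X_{1..n}) k :
  (forall F, F \in B -> #|F| = k) -> squarefree N ->
  cover0_bases B N = [set F :&: ~: supp N | F in cover_bases B N].
Proof.
move=> cardB sqN; apply: (@restrict_bases_const_card _ _ _ k.-1) => F coverF.
have /setIdP [BF _] := coverF.
by rewrite -setDE cardsD (card_cover_bases_supp sqN coverF) cardB // subn1.
Qed.

Section FirstElems.
Variables (n c : nat) (v : 'I_c -> 'I_n).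

Lemma first_elems_sub i : first_elems v i \subset [set v j | j : 'I_c].
Proof. by apply/subsetP => x /imsetP [j _ ->]; apply: imset_f. Qed.

Lemma first_elemsS i j : i <= j -> first_elems v i \subset first_elems v j.
Proof.
move=> le_ij; apply/subsetP => x /imsetP [k]; rewrite inE => lt_ki ->.
by apply: imset_f; rewrite inE (leq_trans lt_ki le_ij).
Qed.

Lemma first_elems0 : first_elems v 0 = set0.
Proof. by apply/setP => x; rewrite inE; apply/imsetP => [[j]]; rewrite inE ltn0. Qed.

Lemma first_elems_full i : c <= i -> first_elems v i = [set v j | j : 'I_c].
Proof.
move=> le_ci; apply/eqP; rewrite eqEsubset first_elems_sub.
by apply/subsetP => x /imsetP [j _ ->]; apply: imset_f; rewrite inE (leq_trans _ le_ci).
Qed.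

Lemma first_elems_succ (i : 'I_c) : first_elems v i.+1 = v i |: first_elems v i.
Proof.
apply/setP => x; rewrite in_setU1; apply/imsetP/orP => [[j] | [/eqP -> | /imsetP [j]]].
- rewrite inE ltnS leq_eqVlt => /orP [/eqP /val_inj -> -> | lt_ji ->]; first by left.
  by right; apply: imset_f; rewrite inE.
- by exists i; rewrite ?inE.
- by rewrite inE => lt_ji ->; exists j; rewrite // inE ltnW.
Qed.

Lemma first_elems_notin (i : 'I_c) : injective v -> v i \notin first_elems v i.
Proof.
move=> inj_v; apply/imsetP => [[j]]; rewrite inE => lt_ji /inj_v eq_ij.
by rewrite eq_ij ltnn in lt_ji.
Qed.

End FirstElems.

Section Levels.
Variables (K : fieldType) (n c : nat) (M : matroid n) (v : 'I_c -> 'I_n).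
Local Notation B := (mbases M).

Lemma Jlevel0 : Jlevel K M v 0 = Jideal K B.
Proof. by rewrite /Jlevel first_elems0 contract_bases0. Qed.

Hypothesis basis_v : ordered_basis M v.

Lemma min_gen_Jlevel j N : min_gen (Jlevel K M v j) N <->
  [/\ squarefree N, minset (transversal B) (supp N)
    & [disjoint supp N & first_elems v j]].
Proof.
rewrite /Jlevel min_gen_Jideal.
rewrite (minset_transversal_contract _ (proj2 basis_v) (first_elems_sub v j)).
by split=> [[? /andP [? ?]] | [? ? ?]]; last (split=> //; apply/andP).
Qed.

Lemma level_of_supp N i : level_of K M v N i ->
  exists lt_ic : i < c,
  [/\ squarefree N, minset (transversal B) (supp N),
      [disjoint supp N & first_elems v i] & v (Ordinal lt_ic) \in supp N].
Proof.
case=> le_ic [/min_gen_Jlevel [sqN minS dis_i] stop].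
have lt_ic : i < c.
  rewrite ltn_neqAle le_ic andbT; apply: contraTneq dis_i => eq_ic.
  rewrite eq_ic first_elems_full // disjoint_sym.
  exact: (forall_inP (minsetp minS) _ (proj2 basis_v)).
exists lt_ic; split=> //; apply: contraT => nS_vi; case: (stop lt_ic).
apply/min_gen_Jlevel; split=> //; rewrite (first_elems_succ v (Ordinal lt_ic)).
rewrite disjoint_subset; apply/subsetP => x Sx; rewrite !inE (disjointFr dis_i Sx).
by rewrite orbF; apply: contraNneq nS_vi => <-.
Qed.

Lemma ex_level_of j N : min_gen (Jlevel K M v j) N -> j <= c ->
  exists2 j', j <= j' & level_of K M v N j'.
Proof.
case/min_gen_Jlevel => sqN minS dis_j le_jc.
pose disjoint_upto j' := (j' <= c) && [disjoint supp N & first_elems v j'].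
have ex_j : exists j', disjoint_upto j' by exists j; apply/andP.
have ub j' : disjoint_upto j' -> j' <= c by case/andP.
case: (ex_maxnP ex_j ub) => j' /andP [le_j'c dis_j'] max_j'.
exists j'; first by apply: max_j'; apply/andP.
split=> //; split; first exact/min_gen_Jlevel.
move=> lt_j'c /min_gen_Jlevel [_ _ dis_next].
by move: (max_j' j'.+1); rewrite /disjoint_upto lt_j'c dis_next ltnn => /(_ isT).
Qed.

Lemma transversal_contract_succ N m i : has_rank M c -> level_of K M v N i ->
  transversal (cover0_bases (contract_bases B (first_elems v i)) N) (supp m) ->
  transversal (contract_bases B (first_elems v i.+1))
    ((supp m :|: supp N) :\: first_elems v i.+1).
Proof.
move=> rankM levN trans_m.
have [lt_ic [sqN _ _ S_vi]] := level_of_supp levN.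
have next := first_elems_succ v (Ordinal lt_ic); rewrite /= in next.
set A := first_elems v i in trans_m next *.
set vi := v (Ordinal lt_ic) in S_vi next.
apply/forall_inP => _ /imsetP [F /setIdP [BF sA'F] ->].
rewrite -setI_eq0; apply/negP => /eqP /setP disZ.
have notZ x : x \in F -> x \notin first_elems v i.+1 ->
    x \notin (supp m :|: supp N) :\: first_elems v i.+1.
  by move=> Fx nA'x; have := disZ x; rewrite !inE Fx nA'x => ->.
have F'S : (F :\: A) :&: supp N = [set vi].
  apply/setP => x; rewrite in_set1.
  apply/idP/eqP => [/setIP [/setDP [Fx nAx] Sx] | ->].
    case A'x : (x \in first_elems v i.+1).
      by move: A'x; rewrite next in_setU1 (negbTE nAx) orbF => /eqP.
    by move: (notZ x Fx (negbT A'x)); rewrite in_setD in_setU A'x Sx orbT.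
  rewrite in_setI in_setD S_vi (subsetP sA'F) ?next ?setU11 // !andbT.
  exact: first_elems_notin (proj1 basis_v).
have cover0 : (F :\: A) :&: ~: supp N \in cover0_bases (contract_bases B A) N.
  rewrite (cover0_bases_const_card (card_contract_bases (A := A) rankM)) //.
  apply: imset_f; rewrite inE sum_squarefree // F'S cards1 eqxx andbT.
  apply/imsetP; exists F => //; rewrite inE BF (subset_trans _ sA'F) //.
  exact: first_elemsS.
have := forall_inP trans_m _ cover0; rewrite -setI_eq0.
case/set0Pn => x /setIP [/setIP [/setDP [Fx nAx]]]; rewrite in_setC => nSx m_x.
have nA'x : x \notin first_elems v i.+1.
  by rewrite next in_setU1 negb_or nAx andbT; apply: contraNneq nSx => ->.
by move: (notZ x Fx nA'x); rewrite in_setD in_setU nA'x m_x.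
Qed.

End Levels.

Lemma C_idealP (K : fieldType) n (s : seq 'X_{1..n}) (N : 'X_{1..n})
    (p : {mpoly K[n]}) :
  C_ideal K s N p <-> forall m, m \in msupp p ->
    exists2 N', (N' \in s) && (index N' s < index N s) & (N' <= N + m)%MM.
Proof.
rewrite /C_ideal /colon -/(monomial_ideal _ _) monomial_idealP.
split=> divN m.
  by move=> p_m; apply: divN; rewrite (perm_mem (msuppMX _ _)) map_f.
by rewrite (perm_mem (msuppMX _ _)) => /mapP [m' /divN + ->].
Qed.

Section ColonIdeal.
Variables (K : fieldType) (n c : nat) (M : matroid n) (v : 'I_c -> 'I_n)
  (s : seq 'X_{1..n}).
Hypotheses (basis_v : ordered_basis M v) (adm_s : admissible_order K M v s).
Local Notation B := (mbases M).
Local Notation precedes N' N := ((N' \in s) && (index N' s < index N s)).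

Lemma transversal_cover0_of_preceding N N' m i :
  N \in s -> level_of K M v N i -> precedes N' N -> (N' <= N + m)%MM ->
  transversal (cover0_bases (contract_bases B (first_elems v i)) N) (supp m).
Proof.
move=> sN levN /andP [sN' lt_N'N] le_N'.
have [_ [sqN minS dis_SA _]] := level_of_supp basis_v levN.
have [_ [s_mem s_order]] := adm_s.
have /min_gen_Jideal [sqN' minD] : min_gen (Jideal K B) N' by apply/s_mem.
have [j' _ levN'] : exists2 j', 0 <= j' & level_of K M v N' j'.
  by apply: ex_level_of; rewrite // Jlevel0; apply/s_mem.
have le_ij' : i <= j'.
  rewrite leqNgt; apply/negP => /(s_order _ _ _ _ sN sN' levN levN').
  by rewrite ltnNge (ltnW lt_N'N).
have dis_DA : [disjoint supp N' & first_elems v i].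
  case: levN' => _ [/(min_gen_Jlevel K basis_v) [_ _ dis_j'] _].
  exact: disjointWr (first_elemsS v le_ij') dis_j'.
have neq_DS : supp N' != supp N.
  apply: contraTneq lt_N'N => eq_DS.
  by rewrite -(mnm_of_supp sqN') eq_DS mnm_of_supp // ltnn.
apply/forall_inP => _ /setIdP [/imsetP [F' coverF' ->] _].
have /eqP /cards1P [x0 F'S] := card_cover_bases_supp sqN coverF'.
case/setIdP: coverF' => /imsetP [F /setIdP [BF sAF] eqF'] _; subst F'.
rewrite -setI_eq0; apply/negP => /eqP /setP dis_m.
have FS : F :&: supp N = [set x0] by rewrite -(setDI_disjoint _ dis_SA).
have FD : F :&: supp N' = [set x0].
  apply: (transversal_meet_sub1 (minsetp minD) BF); rewrite -FS.
  apply/subsetP => x /setIP [Fx Dx]; rewrite inE Fx /=.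
  have /setUP [// | m_x] := subsetP (supp_le_add le_N') x Dx.
  apply: contraT => nSx; have := dis_m x.
  rewrite in_set0 !in_setI in_setC in_setD (negbTE nSx) (disjointFr dis_DA Dx).
  by rewrite Fx m_x.
by move: neq_DS; rewrite (fundamental_cocircuit_unique minS minD BF FS FD) eqxx.
Qed.

Lemma preceding_of_transversal_cover0 N m i : has_rank M c ->
  N \in s -> level_of K M v N i ->
  transversal (cover0_bases (contract_bases B (first_elems v i)) N) (supp m) ->
  exists2 N', precedes N' N & (N' <= N + m)%MM.
Proof.
move=> rankM sN levN trans_m.
have [lt_ic _] := level_of_supp basis_v levN.
have [_ [s_mem s_order]] := adm_s.
have [D] := minset_exists (transversal_contract_succ basis_v rankM levN trans_m).
rewrite (minset_transversal_contract _ (proj2 basis_v) (first_elems_sub v _)).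
case/andP => minD dis_D sDZ.
have sqD := squarefree_mnm_of_set D.
have levD : min_gen (Jlevel K M v i.+1) (mnm_of_set D).
  by apply/(min_gen_Jlevel K basis_v); rewrite supp_mnm_of_set.
have [j' lt_ij' levD'] := ex_level_of basis_v levD lt_ic.
have sD : mnm_of_set D \in s.
  by apply/s_mem/min_gen_Jideal; rewrite supp_mnm_of_set.
exists (mnm_of_set D); first by rewrite sD (s_order _ _ _ _ sD sN levD' levN lt_ij').
apply/mnm_lepP => x; rewrite mnmE mnmDE; case Dx : (x \in D) => //=.
move: (subsetP sDZ x Dx); rewrite !inE => /andP [_ /orP [m_x | S_x]].
  by rewrite addn_gt0 m_x orbT.
by rewrite addn_gt0 S_x.
Qed.

End ColonIdeal.

Lemma ex_enum_with_first n c (G : {set 'I_n}) x : #|G| = c -> x \in G ->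
  exists v : 'I_c -> 'I_n,
    [/\ injective v, [set v j | j : 'I_c] = G & x \in first_elems v 1].
Proof.
move=> cardG Gx; set w := x :: rem x (enum G).
have perm_w : perm_eq (enum G) w by apply: perm_to_rem; rewrite mem_enum.
have size_w : size w = c by rewrite -(perm_size perm_w) -cardE.
have uniq_w : uniq w by rewrite -(perm_uniq perm_w) enum_uniq.
have mem_w : w =i G by move=> y; rewrite -(perm_mem perm_w) mem_enum.
have lt0c : 0 < c by rewrite -cardG card_gt0; apply/set0Pn; exists x.
exists (fun j : 'I_c => nth x w j); split.
- by move=> j1 j2 /eqP; rewrite nth_uniq ?size_w // => /eqP /val_inj.
- apply/setP => y; apply/imsetP/idP => [[j _ ->] | Gy].
    by rewrite -mem_w mem_nth ?size_w.
  have w_y : y \in w by rewrite mem_w.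
  have lt_yc : index y w < c by rewrite -size_w index_mem.
  by exists (Ordinal lt_yc); rewrite //= nth_index.
- by apply/imsetP; exists (Ordinal lt0c); rewrite ?inE.
Qed.

Lemma ex_ordered_basis_level0 (K : fieldType) n c (M : matroid n) (N : 'X_{1..n}) :
  has_rank M c -> min_gen (Jideal K (mbases M)) N ->
  exists v : 'I_c -> 'I_n, ordered_basis M v /\ level_of K M v N 0.
Proof.
move=> rankM minN; have /min_gen_Jideal [_ minS] := minN.
have /set0Pn [F0 BF0] := mbases_nonempty M.
have /set0Pn [x /setIP [_ Sx]] : F0 :&: supp N != set0.
  by rewrite setI_eq0; exact: (forall_inP (minsetp minS)).
have [G BG GS] := min_transversal_meet1 minS Sx.
have /setIP [Gx _] : x \in G :&: supp N by rewrite GS set11.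
have [v [inj_v im_v first_x]] := ex_enum_with_first (rankM G BG) Gx.
have basis_v : ordered_basis M v by split; rewrite ?im_v.
exists v; split=> //; split=> //; split; first by rewrite Jlevel0.
by move=> _ /(min_gen_Jlevel K basis_v) [_ _ /disjointFr /(_ Sx)]; rewrite first_x.
Qed.

Theorem theorem4p13 (K : fieldType) (n c : nat) (M : matroid n) :
  has_rank M c ->
  (forall (v : 'I_c -> 'I_n) (s : seq 'X_{1..n}) (N : 'X_{1..n}) (iN : nat),
     ordered_basis M v ->
     admissible_order K M v s ->
     N \in s ->
     N != head N s ->
     level_of K M v N iN ->
     ideal_eq (C_ideal K s N)
       (if iN == 0%N then Jideal K (cover0_bases (mbases M) N)
        else Jideal K (cover0_bases
                         (contract_bases (mbases M) (first_elems v iN)) N)))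
  /\
  (forall N : 'X_{1..n}, min_gen (Jideal K (mbases M)) N ->
     exists v : 'I_c -> 'I_n, ordered_basis M v /\ level_of K M v N 0).
Proof.
move=> rankM; split=> [v s N iN basis_v adm_s sN _ levN | N]; last first.
  exact: ex_ordered_basis_level0.
rewrite (_ : (if _ then _ else _) =
  Jideal K (cover0_bases (contract_bases (mbases M) (first_elems v iN)) N)).
  move=> p; rewrite C_idealP JidealP; split=> divN m /divN.
    by case=> N'; apply: (transversal_cover0_of_preceding basis_v adm_s sN levN).
  exact: (preceding_of_transversal_cover0 basis_v adm_s rankM sN levN).
by case: eqP => // ->; rewrite first_elems0 contract_bases0.
Qed.
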